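(* Let $X=\varprojlim X_np_n$ be a reduced regular projective limit of vector lattices $(X_n,\le_n)$. For every additive positive function $a\colon X\to\mathbb R$ there exist $n_a\in\mathbb N$ and additive positive functions $a_n\colon X_n\to\mathbb R$, $n\ge n_a$, such that $a(x)=a_n(\operatorname{pr}_nx)$ for all $x\in X$ and all $n\ge n_a$. Conversely, if $a_n\colon X_n\to\mathbb R$ is additive and positive, then $a:=a_n\circ\operatorname{pr}_n$ is an additive positive function on $X$. The same statements hold with ''additive positive'' replaced by ''difference of two additive positive functions''.
   Context: All vector spaces are real. Let $(X_n,\le_n)_{n\in\mathbb N}$ be ordered vector spaces and $p_n\colon X_{n+1}\to X_n$ positive linear maps. The projective limit $X=\varprojlim X_np_n$ is the vector subspace $\{x=(x_n)\in\prod_nX_n:\ x_n=p_n(x_{n+1})\ \text{for all }n\}$ with the coordinatewise order; $\operatorname{pr}_nx=x_n$. It is regular if all $X_n$ are vector lattices and each $p_n$ preserves suprema of finite sets, and reduced if $\operatorname{pr}_nX=X_n$ for all $n$. A function $a$ between additive semigroups is additive if $a(x_1+x_2)=a(x_1)+a(x_2)$; a function $a$ between ordered vector spaces is positive if $a(x)\ge0$ whenever $x\ge0$. *)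

From Stdlib Require Import Reals List.
Open Scope R_scope.
Set Implicit Arguments.

Record OVS := {
  car :> Type;
  vzero : car;
  vadd : car -> car -> car;
  vopp : car -> car;
  vscal : R -> car -> car;
  vle : car -> car -> Prop;
  vaddA : forall x y z, vadd x (vadd y z) = vadd (vadd x y) z;
  vaddC : forall x y, vadd x y = vadd y x;
  vadd0 : forall x, vadd x vzero = x;
  vaddN : forall x, vadd x (vopp x) = vzero;
  vscal1 : forall x, vscal 1 x = x;
  vscalA : forall s t x, vscal s (vscal t x) = vscal (s * t) x;
  vscalDr : forall t x y, vscal t (vadd x y) = vadd (vscal t x) (vscal t y);
  vscalDl : forall s t x, vscal (s + t) x = vadd (vscal s x) (vscal t x);
  vle_refl : forall x, vle x x;
  vle_antisym : forall x y, vle x y -> vle y x -> x = y;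
  vle_trans : forall x y z, vle x y -> vle y z -> vle x z;
  vle_add : forall x y z, vle x y -> vle (vadd x z) (vadd y z);
  vle_scal : forall t x y, 0 <= t -> vle x y -> vle (vscal t x) (vscal t y)
}.

Record PosLin (A B : OVS) := {
  pl_fun :> car A -> car B;
  pl_add : forall x y, pl_fun (vadd A x y) = vadd B (pl_fun x) (pl_fun y);
  pl_scal : forall t x, pl_fun (vscal A t x) = vscal B t (pl_fun x);
  pl_pos : forall x, vle A (vzero A) x -> vle B (vzero B) (pl_fun x)
}.

Definition is_sup (V : OVS) (S : list (car V)) (s : car V) : Prop :=
  (forall y, In y S -> vle V y s) /\
  (forall u, (forall y, In y S -> vle V y u) -> vle V s u).

Definition is_vector_lattice (V : OVS) : Prop :=
  forall x y : car V, exists s, is_sup V (x :: y :: nil) s.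

Definition preserves_finite_sups (A B : OVS) (p : car A -> car B) : Prop :=
  forall (S : list (car A)) (s : car A), S <> nil ->
    is_sup A S s -> is_sup B (map p S) (p s).

Definition plim (X : nat -> OVS) (p : forall n, PosLin (X (S n)) (X n)) : Type :=
  { x : forall n, car (X n) | forall n, x n = p n (x (S n)) }.

Definition pr (X : nat -> OVS) (p : forall n, PosLin (X (S n)) (X n))
  (n : nat) (x : plim X p) : car (X n) := proj1_sig x n.

Definition plim_add (X : nat -> OVS) (p : forall n, PosLin (X (S n)) (X n))
  (x y : plim X p) : plim X p.
Proof.
  refine (exist _ (fun n => vadd (X n) (proj1_sig x n) (proj1_sig y n)) _).
  intro n. rewrite (pl_add (p n)). rewrite <- (proj2_sig x n), <- (proj2_sig y n).
  reflexivity.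
Defined.

Definition plim_nonneg (X : nat -> OVS) (p : forall n, PosLin (X (S n)) (X n))
  (x : plim X p) : Prop := forall n, vle (X n) (vzero (X n)) (proj1_sig x n).

Definition is_regular (X : nat -> OVS) (p : forall n, PosLin (X (S n)) (X n)) : Prop :=
  (forall n, is_vector_lattice (X n)) /\
  (forall n, @preserves_finite_sups (X (S n)) (X n) (pl_fun (p n))).

Definition is_reduced (X : nat -> OVS) (p : forall n, PosLin (X (S n)) (X n)) : Prop :=
  forall n (y : car (X n)), exists x : plim X p, pr n x = y.

Definition additive {T : Type} (add : T -> T -> T) (a : T -> R) : Prop :=
  forall x1 x2, a (add x1 x2) = a x1 + a x2.

Definition positive {T : Type} (nonneg : T -> Prop) (a : T -> R) : Prop :=
  forall x, nonneg x -> 0 <= a x.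

Definition add_pos {T : Type} (add : T -> T -> T) (nonneg : T -> Prop) (a : T -> R) :=
  additive add a /\ positive nonneg a.

Definition diff_add_pos {T : Type} (add : T -> T -> T) (nonneg : T -> Prop) (a : T -> R) :=
  exists b c, add_pos add nonneg b /\ add_pos add nonneg c /\ forall x, a x = b x - c x.

Definition addV (V : OVS) := vadd V.
Definition nonnegV (V : OVS) (x : car V) : Prop := vle V (vzero V) x.

(* An additive positive a on X cannot "see" arbitrarily deep coordinates: if for
   every N some x with pr_N x = 0 had a x <> 0, then (taking positive parts, which
   exist in X by regularity, and integer multiples) one finds u_N >= 0 with
   pr_N u_N = 0 and a u_N >= 1.  The series w = sum_N u_N is a well-defined element
   of X, since its k-th coordinate is a finite sum, and w dominates every partial
   sum, so a w >= M for all M, which is absurd.  Hence a vanishes on the kernel of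
   some pr_na, so for n >= na it factors through pr_n, which is onto by reducedness;
   positive parts again show that the factor is positive. *)
From Pilot Require Import Defs.
From Stdlib Require Import Reals Arith Lia Lra List.
From Stdlib Require Import Classical ClassicalEpsilon FunctionalExtensionality ProofIrrelevance.
Open Scope R_scope.

Section OrderedVectorSpace.

Variable V : OVS.

Lemma vadd0l (x : car V) : vadd V (vzero V) x = x.
Proof. rewrite vaddC, vadd0. reflexivity. Qed.

Lemma vadd_idem_eq0 (x : car V) : vadd V x x = x -> x = vzero V.
Proof.
  intro H. rewrite <- (vaddN V x). rewrite <- H at 2.
  rewrite <- vaddA, vaddN, vadd0. reflexivity.
Qed.

Lemma vopp_uniq (x y : car V) : vadd V x y = vzero V -> y = vopp V x.
Proof.
  intro H. rewrite <- (vadd0l y), <- (vaddN V x), (vaddC V x (vopp V x)).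
  rewrite <- vaddA, H, vadd0. reflexivity.
Qed.

Lemma vopp0 : vopp V (vzero V) = vzero V.
Proof. symmetry. apply vopp_uniq, vadd0. Qed.

Lemma vaddNKC (x y : car V) : vadd V y (vadd V x (vopp V y)) = x.
Proof. rewrite (vaddC V x), vaddA, vaddN, vadd0l. reflexivity. Qed.

Lemma vle_subr_ge0 (x y : car V) : vle V x y -> vle V (vzero V) (vadd V y (vopp V x)).
Proof. intro H. rewrite <- (vaddN V x). apply vle_add, H. Qed.

Lemma vle_addr (x y : car V) : vle V (vzero V) y -> vle V x (vadd V x y).
Proof.
  intro H. rewrite <- (vadd0l x) at 1. rewrite (vaddC V x y). apply vle_add, H.
Qed.

Lemma vadd_ge0 (x y : car V) :
  vle V (vzero V) x -> vle V (vzero V) y -> vle V (vzero V) (vadd V x y).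
Proof. intros Hx Hy. apply (vle_trans V _ x); [exact Hx | apply vle_addr, Hy]. Qed.

Lemma is_sup_unique (S : list (car V)) (s1 s2 : car V) :
  is_sup V S s1 -> is_sup V S s2 -> s1 = s2.
Proof.
  intros [H1 H1'] [H2 H2']. apply vle_antisym; [apply H1' | apply H2']; assumption.
Qed.

Lemma is_sup_ge0 (y : car V) : vle V (vzero V) y -> is_sup V (y :: vzero V :: nil) y.
Proof.
  intro H. split.
  - intros z [<- | [<- | []]]; [apply vle_refl | exact H].
  - intros u Hu. apply Hu. left. reflexivity.
Qed.

End OrderedVectorSpace.

Section PositiveLinearMap.

Variables A B : OVS.
Variable f : PosLin A B.

Lemma pl_zero : f (vzero A) = vzero B.
Proof. apply vadd_idem_eq0. rewrite <- pl_add, vadd0. reflexivity. Qed.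

Lemma pl_opp (x : car A) : f (vopp A x) = vopp B (f x).
Proof. apply vopp_uniq. rewrite <- pl_add, vaddN. apply pl_zero. Qed.

End PositiveLinearMap.

Section ProjectiveLimit.

Variable X : nat -> OVS.
Variable p : forall n, PosLin (X (S n)) (X n).

Local Notation plim := (plim X p).
Local Notation pr := (@pr X p).
Local Notation plim_add := (@plim_add X p).
Local Notation plim_nonneg := (@plim_nonneg X p).

Lemma plim_eq (x y : plim) : (forall n, pr n x = pr n y) -> x = y.
Proof.
  destruct x as [x hx], y as [y hy]. unfold pr. simpl. intro H.
  assert (x = y) by (apply functional_extensionality_dep; exact H). subst y.
  f_equal. apply proof_irrelevance.
Qed.

Definition plim_zero : plim.
Proof.
  refine (exist _ (fun n => vzero (X n)) _). intro n. symmetry. apply pl_zero.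
Defined.

Definition plim_opp (x : plim) : plim.
Proof.
  refine (exist _ (fun n => vopp (X n) (pr n x)) _).
  intro n. unfold pr. rewrite (proj2_sig x n) at 1. symmetry. apply pl_opp.
Defined.

Definition plim_sub (x y : plim) : plim := plim_add x (plim_opp y).

Lemma pr_eq0_le (x : plim) (n k : nat) :
  pr n x = vzero (X n) -> (k <= n)%nat -> pr k x = vzero (X k).
Proof.
  intros H Hk. induction n as [|n IH].
  - replace k with 0%nat by lia. exact H.
  - destruct (Nat.eq_dec k (S n)) as [-> | Hne]; [exact H |].
    apply IH; [| lia]. unfold pr in *. rewrite (proj2_sig x n), H. apply pl_zero.
Qed.

Fixpoint plim_psum (u : nat -> plim) (m : nat) : plim :=
  match m with
  | O => plim_zero
  | S m => plim_add (plim_psum u m) (u m)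
  end.

Lemma plim_psum_nonneg (u : nat -> plim) (m : nat) :
  (forall i, plim_nonneg (u i)) -> plim_nonneg (plim_psum u m).
Proof.
  intros Hu. induction m as [|m IH]; intro k; simpl.
  - apply vle_refl.
  - apply vadd_ge0; [apply IH | apply Hu].
Qed.

Lemma pr_psum_eq0 (u : nat -> plim) (k m : nat) :
  (forall i, pr k (u i) = vzero (X k)) -> pr k (plim_psum u m) = vzero (X k).
Proof.
  intros Hu. induction m as [|m IH]; [reflexivity |].
  change (vadd (X k) (pr k (plim_psum u m)) (pr k (u m)) = vzero (X k)).
  rewrite IH, Hu. apply vadd0.
Qed.

Lemma pr_psum_stable (u : nat -> plim) (k m : nat) :
  (forall i, pr i (u i) = vzero (X i)) -> (k <= m)%nat ->
  pr k (plim_psum u m) = pr k (plim_psum u k).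
Proof.
  intros Hu H. induction H as [|m H IH]; [reflexivity |].
  rewrite <- IH.
  change (vadd (X k) (pr k (plim_psum u m)) (pr k (u m)) = pr k (plim_psum u m)).
  rewrite (pr_eq0_le (u m) m k (Hu m) H). apply vadd0.
Qed.

Lemma pr_psum_le (u : nat -> plim) (k m m' : nat) :
  (forall i, plim_nonneg (u i)) -> (m <= m')%nat ->
  vle (X k) (pr k (plim_psum u m)) (pr k (plim_psum u m')).
Proof.
  intros Hu H. induction H as [|m' H IH]; [apply vle_refl |].
  apply (vle_trans _ _ _ _ IH). unfold pr. simpl. apply vle_addr, Hu.
Qed.

(* When pr_i (u i) = 0, only u_0, ..., u_(k-1) contribute to the k-th coordinate. *)
Definition plim_series (u : nat -> plim) (Hu : forall i, pr i (u i) = vzero (X i)) : plim.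
Proof.
  refine (exist _ (fun k => pr k (plim_psum u k)) _).
  intro k. rewrite <- (pr_psum_stable u k (S k) Hu) by lia.
  apply (proj2_sig (plim_psum u (S k)) k).
Defined.

Lemma plim_series_ge_psum (u : nat -> plim) (Hu : forall i, pr i (u i) = vzero (X i)) (m : nat) :
  (forall i, plim_nonneg (u i)) ->
  plim_nonneg (plim_sub (plim_series u Hu) (plim_psum u m)).
Proof.
  intros Hnn k. apply vle_subr_ge0. change (vle (X k) (pr k (plim_psum u m)) (pr k (plim_psum u k))).
  destruct (le_lt_dec m k) as [Hmk | Hkm].
  - apply pr_psum_le; assumption.
  - rewrite (pr_psum_stable u k m Hu) by lia. apply vle_refl.
Qed.

Section AdditiveFunction.

Variable a : plim -> R.
Hypothesis a_add : additive plim_add a.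

Lemma additive_zero : a plim_zero = 0.
Proof.
  assert (E : plim_add plim_zero plim_zero = plim_zero).
  { apply plim_eq. intro n. apply vadd0. }
  pose proof (a_add plim_zero plim_zero) as H. rewrite E in H. lra.
Qed.

Lemma additive_sub (x y : plim) : a (plim_sub x y) = a x - a y.
Proof.
  assert (E : plim_add y (plim_sub x y) = x).
  { apply plim_eq. intro n. apply vaddNKC. }
  pose proof (a_add y (plim_sub x y)) as H. rewrite E in H. lra.
Qed.

Lemma additive_psum_ge (u : nat -> plim) (c : R) (m : nat) :
  (forall i, c <= a (u i)) -> INR m * c <= a (plim_psum u m).
Proof.
  intros Hu. induction m as [|m IH]; simpl plim_psum.
  - rewrite additive_zero. simpl. lra.
  - rewrite a_add, S_INR. specialize (Hu m). lra.
Qed.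

Lemma additive_factors_pr (na n : nat) :
  (forall x, pr na x = vzero (X na) -> a x = 0) -> (na <= n)%nat ->
  forall x y, pr n x = pr n y -> a x = a y.
Proof.
  intros Hker Hn x y E.
  assert (Hxy : a (plim_sub x y) = 0).
  { apply Hker, (pr_eq0_le _ n); [| exact Hn].
    change (vadd (X n) (pr n x) (vopp (X n) (pr n y)) = vzero (X n)).
    rewrite E. apply vaddN. }
  rewrite additive_sub in Hxy. lra.
Qed.

Lemma additive_large_multiple (z : plim) (N : nat) :
  plim_nonneg z -> pr N z = vzero (X N) -> 0 < a z ->
  exists u, plim_nonneg u /\ pr N u = vzero (X N) /\ 1 <= a u.
Proof.
  intros Hz HN Ha.
  destruct (INR_unbounded (/ a z)) as [m Hm].
  exists (plim_psum (fun _ => z) m). split; [| split].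
  - apply plim_psum_nonneg. intros _. exact Hz.
  - apply pr_psum_eq0. intros _. exact HN.
  - apply (Rle_trans _ (INR m * a z)).
    + apply Rmult_lt_compat_r with (r := a z) in Hm; [| exact Ha].
      rewrite Rinv_l in Hm; lra.
    + apply additive_psum_ge. intros _. apply Rle_refl.
Qed.

Hypothesis a_pos : Defs.positive plim_nonneg a.

Lemma add_pos_le (x y : plim) : plim_nonneg (plim_sub x y) -> a y <= a x.
Proof. intro H. pose proof (a_pos _ H). rewrite additive_sub in *. lra. Qed.

Lemma add_pos_no_unit_sequence (u : nat -> plim) :
  (forall i, plim_nonneg (u i)) -> (forall i, pr i (u i) = vzero (X i)) ->
  ~ (forall i, 1 <= a (u i)).
Proof.
  intros Hnn Hu Hge.
  set (w := plim_series u Hu).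
  destruct (INR_unbounded (a w)) as [m Hm].
  assert (Hpsum : INR m * 1 <= a (plim_psum u m)) by (apply additive_psum_ge; exact Hge).
  assert (Hw : a (plim_psum u m) <= a w) by (apply add_pos_le, plim_series_ge_psum, Hnn).
  lra.
Qed.

End AdditiveFunction.

Section Regular.

Hypothesis Hreg : is_regular X p.

Definition vpos (n : nat) (v : car (X n)) : car (X n) :=
  proj1_sig (constructive_indefinite_description _ (proj1 Hreg n v (vzero (X n)))).

Lemma vpos_is_sup (n : nat) (v : car (X n)) :
  is_sup (X n) (v :: vzero (X n) :: nil) (vpos n v).
Proof. unfold vpos. exact (proj2_sig (constructive_indefinite_description _ _)). Qed.

Definition plim_pos (x : plim) : plim.
Proof.
  refine (exist _ (fun n => vpos n (pr n x)) _).
  intro n.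
  assert (Hne : pr (S n) x :: vzero (X (S n)) :: nil <> nil) by discriminate.
  pose proof (proj2 Hreg n _ _ Hne (vpos_is_sup (S n) (pr (S n) x))) as H.
  simpl in H. rewrite pl_zero in H. unfold pr in *. rewrite <- (proj2_sig x n) in H.
  exact (is_sup_unique (X n) _ _ _ (vpos_is_sup n _) H).
Defined.

Lemma plim_pos_nonneg (x : plim) : plim_nonneg (plim_pos x).
Proof. intro n. apply (proj1 (vpos_is_sup n (pr n x))). right. left. reflexivity. Qed.

Lemma plim_pos_sub_nonneg (x : plim) : plim_nonneg (plim_sub (plim_pos x) x).
Proof.
  intro n. apply vle_subr_ge0. apply (proj1 (vpos_is_sup n (pr n x))). left. reflexivity.
Qed.

Lemma pr_plim_pos (x : plim) (n : nat) :
  vle (X n) (vzero (X n)) (pr n x) -> pr n (plim_pos x) = pr n x.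
Proof. intro H. apply (is_sup_unique (X n) _ _ _ (vpos_is_sup n _)), is_sup_ge0, H. Qed.

Variable a : plim -> R.
Hypothesis Ha : add_pos plim_add plim_nonneg a.

Lemma add_pos_nonneg_witness (x : plim) (N : nat) :
  pr N x = vzero (X N) -> a x <> 0 ->
  exists z, plim_nonneg z /\ pr N z = vzero (X N) /\ 0 < a z.
Proof.
  intros HN Hax. destruct Ha as [Hadd Hpos].
  set (z1 := plim_pos x). set (z2 := plim_sub z1 x).
  assert (N1 : plim_nonneg z1) by apply plim_pos_nonneg.
  assert (N2 : plim_nonneg z2) by apply plim_pos_sub_nonneg.
  assert (P1 : pr N z1 = vzero (X N)).
  { unfold z1. rewrite pr_plim_pos, HN; [reflexivity | rewrite HN; apply vle_refl]. }
  assert (P2 : pr N z2 = vzero (X N)).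
  { change (vadd (X N) (pr N z1) (vopp (X N) (pr N x)) = vzero (X N)).
    rewrite P1, HN, vopp0. apply vadd0. }
  pose proof (Hpos _ N1). pose proof (Hpos _ N2).
  pose proof (additive_sub a Hadd z1 x) as E. fold z2 in E.
  destruct (Req_dec (a z1) 0).
  - exists z2. repeat split; auto. lra.
  - exists z1. repeat split; auto. lra.
Qed.

Lemma add_pos_vanishes_on_ker_pr :
  exists na, forall x, pr na x = vzero (X na) -> a x = 0.
Proof.
  destruct Ha as [Hadd Hpos].
  apply NNPP. intro Hnot.
  assert (Hunit : forall N, exists u, plim_nonneg u /\ pr N u = vzero (X N) /\ 1 <= a u).
  { intro N.
    assert (HN : ~ forall x, pr N x = vzero (X N) -> a x = 0) by (intro H; apply Hnot; exists N; exact H).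
    apply not_all_ex_not in HN as [x Hx].
    apply imply_to_and in Hx as [HN Hax].
    destruct (add_pos_nonneg_witness x N HN Hax) as [z [Hz [HzN Haz]]].
    exact (additive_large_multiple a Hadd z N Hz HzN Haz). }
  apply choice in Hunit as [u Hu].
  apply (add_pos_no_unit_sequence a Hadd Hpos u); intro i; apply Hu.
Qed.

End Regular.

Section Reduced.

Hypothesis Hred : is_reduced X p.

Definition plim_lift (n : nat) (y : car (X n)) : plim :=
  proj1_sig (constructive_indefinite_description _ (Hred n y)).

Lemma pr_plim_lift (n : nat) (y : car (X n)) : pr n (plim_lift n y) = y.
Proof. unfold plim_lift. exact (proj2_sig (constructive_indefinite_description _ (Hred n y))). Qed.

End Reduced.

Lemma add_pos_factors (Hreg : is_regular X p) (Hred : is_reduced X p) (a : plim -> R) :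
  add_pos plim_add plim_nonneg a ->
  exists (na : nat) (an : forall n, car (X n) -> R),
    forall n, (na <= n)%nat ->
      add_pos (addV (X n)) (nonnegV (X n)) (an n) /\ forall x, a x = an n (pr n x).
Proof.
  intros Ha. destruct (add_pos_vanishes_on_ker_pr Hreg a Ha) as [na Hker].
  exists na, (fun n y => a (plim_lift Hred n y)). intros n Hn.
  pose proof (additive_factors_pr a (proj1 Ha) na n Hker Hn) as Hfac.
  split; [split |].
  - intros y1 y2. rewrite <- (proj1 Ha). apply Hfac.
    change (pr n (plim_lift Hred n (vadd (X n) y1 y2))
            = vadd (X n) (pr n (plim_lift Hred n y1)) (pr n (plim_lift Hred n y2))).
    rewrite !pr_plim_lift. reflexivity.
  - intros y Hy. rewrite (Hfac _ (plim_pos Hreg (plim_lift Hred n y))).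
    + apply (proj2 Ha), plim_pos_nonneg.
    + rewrite pr_plim_pos; rewrite pr_plim_lift; [reflexivity | exact Hy].
  - intro x. apply Hfac. rewrite pr_plim_lift. reflexivity.
Qed.

Lemma diff_add_pos_factors (Hreg : is_regular X p) (Hred : is_reduced X p) (a : plim -> R) :
  diff_add_pos plim_add plim_nonneg a ->
  exists (na : nat) (an : forall n, car (X n) -> R),
    forall n, (na <= n)%nat ->
      diff_add_pos (addV (X n)) (nonnegV (X n)) (an n) /\ forall x, a x = an n (pr n x).
Proof.
  intros [b [c [Hb [Hc Eabc]]]].
  destruct (add_pos_factors Hreg Hred b Hb) as [nb [bn Hbn]].
  destruct (add_pos_factors Hreg Hred c Hc) as [nc [cn Hcn]].
  exists (Nat.max nb nc), (fun n y => bn n y - cn n y). intros n Hn.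
  destruct (Hbn n ltac:(lia)) as [Hb' Eb]. destruct (Hcn n ltac:(lia)) as [Hc' Ec].
  split.
  - exists (bn n), (cn n). auto.
  - intro x. rewrite Eabc, Eb, Ec. reflexivity.
Qed.

End ProjectiveLimit.

Section Composition.

Context {T U : Type}.
Context {addT : T -> T -> T} {nonnegT : T -> Prop}.
Context {addU : U -> U -> U} {nonnegU : U -> Prop}.
Context {f : T -> U}.
Hypothesis f_add : forall x y, f (addT x y) = addU (f x) (f y).
Hypothesis f_nonneg : forall x, nonnegT x -> nonnegU (f x).

Lemma add_pos_comp (b : U -> R) :
  add_pos addU nonnegU b -> add_pos addT nonnegT (fun x => b (f x)).
Proof.
  intros [Hadd Hpos]. split.
  - intros x y. rewrite f_add. apply Hadd.
  - intros x Hx. apply Hpos, f_nonneg, Hx.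
Qed.

Lemma diff_add_pos_comp (b : U -> R) :
  diff_add_pos addU nonnegU b -> diff_add_pos addT nonnegT (fun x => b (f x)).
Proof.
  intros [c [d [Hc [Hd E]]]].
  exists (fun x => c (f x)), (fun x => d (f x)).
  split; [| split]; [apply add_pos_comp .. | intro x; apply E]; assumption.
Qed.

End Composition.

Theorem mainTheorem2 (X : nat -> OVS) (p : forall n, PosLin (X (S n)) (X n))
  (Hreg : is_regular X p) (Hred : is_reduced X p) :
  (* additive positive functions *)
  (forall a : plim X p -> R, add_pos (@plim_add X p) (@plim_nonneg X p) a ->
     exists (na : nat) (an : forall n, car (X n) -> R),
       forall n, (na <= n)%nat ->
         add_pos (addV (X n)) (nonnegV (X n)) (an n) /\
         forall x : plim X p, a x = an n (pr n x)) /\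
  (forall (n : nat) (an : car (X n) -> R),
     add_pos (addV (X n)) (nonnegV (X n)) an ->
     add_pos (@plim_add X p) (@plim_nonneg X p) (fun x => an (pr n x))) /\
  (* differences of two additive positive functions *)
  (forall a : plim X p -> R, diff_add_pos (@plim_add X p) (@plim_nonneg X p) a ->
     exists (na : nat) (an : forall n, car (X n) -> R),
       forall n, (na <= n)%nat ->
         diff_add_pos (addV (X n)) (nonnegV (X n)) (an n) /\
         forall x : plim X p, a x = an n (pr n x)) /\
  (forall (n : nat) (an : car (X n) -> R),
     diff_add_pos (addV (X n)) (nonnegV (X n)) an ->
     diff_add_pos (@plim_add X p) (@plim_nonneg X p) (fun x => an (pr n x))).
Proof.
  assert (pr_add : forall n x y,
            pr n (@plim_add X p x y) = addV (X n) (pr n x) (pr n y)) by reflexivity.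
  assert (pr_nonneg : forall n x, @plim_nonneg X p x -> nonnegV (X n) (pr n x))
    by (intros n x Hx; apply Hx).
  split; [exact (add_pos_factors X p Hreg Hred) |].
  split; [intro n; exact (add_pos_comp (pr_add n) (pr_nonneg n)) |].
  split; [exact (diff_add_pos_factors X p Hreg Hred) |].
  intro n. exact (diff_add_pos_comp (pr_add n) (pr_nonneg n)).
Qed.
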